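(* Let $n\ge 2$ and let $\Phi$ be any quantum channel on $\mathcal D_n$. Then $$\operatorname{tr}\big(\sigma^\Phi\big)^2 \;\le\; 1-\frac{n+1}{n}\Big(1-e^{-S_2^{\min}(\Phi)}\Big),$$ i.e. if $\operatorname{tr}\big(\Phi(|\varphi\rangle\langle\varphi|)\big)^2\le 1-\epsilon$ for every unit vector $\varphi\in\mathbb C^n$, then $\operatorname{tr}(\sigma^\Phi)^2\le 1-\epsilon(n+1)/n$. Equivalently, $S_2^{\mathrm{map}}(\Phi)\ge S_2^{\mathrm{map}}(\Lambda_n)$ for any depolarizing channel $\Lambda_n$ with $S_2^{\min}(\Lambda_n)=S_2^{\min}(\Phi)$; that is, among all channels on $\mathcal D_n$ with a given minimal output Renyi-2 entropy, the depolarizing channel has the smallest Renyi-2 map entropy. Equivalently again, $$S_2^{\min}(\Phi)\;\le\; -\log\Big(\frac{1+n\,e^{-S_2^{\mathrm{map}}(\Phi)}}{n+1}\Big),$$ with equality when $\Phi$ is a depolarizing channel.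
   Context: $\mathcal D_n$ denotes the set of $n\times n$ density matrices (positive semidefinite, trace one). A quantum channel on $\mathcal D_n$ is a linear, completely positive, trace-preserving map; equivalently $\Phi(\rho)=\sum_\alpha K_\alpha\rho K_\alpha^\dagger$ with $\sum_\alpha K_\alpha^\dagger K_\alpha=\mathbb 1$. The Jamiołkowski state of $\Phi$ is $\sigma^\Phi=(\Phi\otimes\mathrm{id})(|\phi_+\rangle\langle\phi_+|)\in\mathcal D_{n^2}$, where $|\phi_+\rangle=\frac1{\sqrt n}\sum_{i=1}^n|i\rangle\otimes|i\rangle$. The Renyi entropy of order $q$ is $S_q(\rho)=\frac1{1-q}\log\operatorname{tr}\rho^q$ (with the von Neumann entropy $-\operatorname{tr}\rho\log\rho$ at $q=1$). The minimal output entropy is $S_q^{\min}(\Phi)=\min_{\rho\in\mathcal D_n}S_q(\Phi(\rho))$ and the map entropy is $S_q^{\mathrm{map}}(\Phi)=S_q(\sigma^\Phi)$. The depolarizing channels are $\Lambda_n(\rho)=\lambda\rho+(1-\lambda)\frac1n\mathbb 1$ with $\lambda\in[-\frac1{n^2-1},1]$; for them $S_2^{\min}(\Lambda_n)=-\log\frac{1+(n-1)\lambda^2}{n}$ and $S_2^{\mathrm{map}}(\Lambda_n)=-\log\frac{1+(n^2-1)\lambda^2}{n^2}$. *)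

(* Complex scalars: an arbitrary numClosedFieldType C
   (e.g. algC); all quantities are algebraic, so this is the natural
   generic setting. *)
From HB Require Import structures.
From mathcomp Require Import all_boot all_order all_algebra.
Set Implicit Arguments. Unset Strict Implicit. Unset Printing Implicit Defensive.
Import Order.TTheory GRing.Theory Num.Theory.
Local Open Scope ring_scope.

Section QDefs.
Variable C : numClosedFieldType.

Definition adj m n (A : 'M[C]_(m, n)) : 'M[C]_(n, m) := \matrix_(i, j) (A j i)^*.

(* split an index of 'I_(m*n) into the pair (i,j) (inverse of mxvec_index) *)
Definition pair_of_index m n (k : 'I_(m * n)) : 'I_m * 'I_n :=
  enum_val (cast_ord (esym (mxvec_cast m n)) k).

(* Kronecker product A (x) B, index (i,j) <-> mxvec_index i j *)
Definition kron m1 n1 m2 n2 (A : 'M[C]_(m1, n1)) (B : 'M[C]_(m2, n2))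
  : 'M[C]_(m1 * m2, n1 * n2) :=
  \matrix_(k, l) (A (pair_of_index k).1 (pair_of_index l).1 *
                  B (pair_of_index k).2 (pair_of_index l).2).

(* A quantum channel given in Kraus form: Phi(rho) = sum_a K_a rho K_a^dag *)
Definition kraus_apply n (K : seq 'M[C]_n) (rho : 'M[C]_n) : 'M[C]_n :=
  \sum_(k <- K) (k *m rho *m adj k).

Definition trace_preserving n (K : seq 'M[C]_n) : Prop :=
  \sum_(k <- K) (adj k *m k) = 1%:M.

Definition unit_mx n (i j : 'I_n) : 'M[C]_n := delta_mx i j.

(* Jamiolkowski state sigma^Phi = (Phi (x) id)(|phi+><phi+|)
   = (1/n) sum_{i,j} Phi(|i><j|) (x) |i><j| *)
Definition jamiolkowski n (K : seq 'M[C]_n) : 'M[C]_(n * n) :=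
  (n%:R)^-1 *: \sum_(i < n) \sum_(j < n)
     kron (kraus_apply K (unit_mx i j)) (unit_mx i j).

Definition purity n (rho : 'M[C]_n) : C := \tr (rho *m rho).

End QDefs.

From HB Require Import structures.
From mathcomp Require Import all_boot all_order all_algebra ring.
Set Implicit Arguments. Unset Strict Implicit. Unset Printing Implicit Defensive.
Import Order.TTheory GRing.Theory Num.Theory.
Local Open Scope ring_scope.

(* The purity of Phi(|x><x|) is the quartic form
     q(x) = sum_{k,l} <x|K_k^dag K_l|x> <x|K_l^dag K_k|x>.
   The n standard basis vectors together with the 4^n vectors with entries in
   {1, i, -1, -i} form a weighted complex projective 2-design: the weighted sum
   of <x|A|x><x|B|x> over them is tr A tr B + tr (A B).  Applied to q, this sum
   is n^2 tr (sigma^Phi)^2 + tr M^2 with M = sum_k K_k K_k^dag.  Trace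
   preservation gives tr M = n, hence tr M^2 >= n, while the hypothesis bounds
   the weighted sum by (n + n^2)(1 - eps). *)

Lemma big_deltar (R : pzSemiRingType) n (a : 'I_n) (F : 'I_n -> R) :
  \sum_i F i * (a == i)%:R = F a.
Proof.
rewrite (bigD1 a) //= eqxx mulr1 big1 ?addr0 // => i /negPf.
by rewrite eq_sym => ->; rewrite mulr0.
Qed.

Lemma prodr_if (R : comPzSemiRingType) n (P : pred 'I_n) (c : R) :
  \prod_(x < n) (if P x then c else 0) = if [forall x, P x] then c ^+ n else 0.
Proof.
case: forallP => [allP | /forallP].
  by rewrite (eq_bigr (fun _ => c)) ?prodr_const ?card_ord // => x _; rewrite allP.
rewrite negb_forall => /existsP[x /negPf Px].
by rewrite (bigD1 x) //= Px mul0r.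
Qed.

Lemma sum_prim_root_expr (R : idomainType) (z : R) d m : d.-primitive_root z ->
  \sum_(s < d) z ^+ (m * s) = if (d %| m)%N then d%:R else 0.
Proof.
move=> prim_z; under eq_bigr do rewrite exprM.
rewrite (prim_order_dvd prim_z); have [/eqP zm1 | zm_neq1] := ifP.
  by under eq_bigr do rewrite zm1 expr1n; rewrite sumr_const card_ord.
have : (z ^+ m - 1) * \sum_(s < d) (z ^+ m) ^+ s = 0.
  by rewrite -subrX1 -exprM mulnC exprM (prim_expr_order prim_z) expr1n subrr.
by move/eqP; rewrite mulf_eq0 subr_eq0 zm_neq1 => /eqP.
Qed.

Section Channels.
Variable C : numClosedFieldType.

Lemma adj_mul m n p (A : 'M[C]_(m, n)) (B : 'M[C]_(n, p)) :
  adj (A *m B) = adj B *m adj A.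
Proof.
apply/matrixP=> i j; rewrite !mxE rmorph_sum; apply: eq_bigr => k _.
by rewrite !mxE rmorphM mulrC.
Qed.

Lemma adjK m n (A : 'M[C]_(m, n)) : adj (adj A) = A.
Proof. by apply/matrixP=> i j; rewrite !mxE conjCK. Qed.

Lemma adjB m n (A B : 'M[C]_(m, n)) : adj (A - B) = adj A - adj B.
Proof. by apply/matrixP=> i j; rewrite !mxE rmorphB. Qed.

Lemma adjZ m n (s : C) (A : 'M[C]_(m, n)) : adj (s *: A) = s^* *: adj A.
Proof. by apply/matrixP=> i j; rewrite !mxE rmorphM. Qed.

Lemma adj_delta m n (i : 'I_m) (j : 'I_n) :
  adj (delta_mx i j : 'M[C]_(m, n)) = delta_mx j i.
Proof. by apply/matrixP=> a b; rewrite !mxE andbC; case: (_ && _); rewrite ?conjC1 ?conjC0. Qed.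

Lemma adj_delta_mul_delta n (i : 'I_n) :
  adj (delta_mx i 0 : 'cV[C]_n) *m delta_mx i 0 = 1%:M.
Proof. by rewrite adj_delta mul_delta_mx; apply/matrixP=> a b; rewrite !ord1 !mxE. Qed.

Lemma adj1 n : adj (1%:M : 'M[C]_n) = 1%:M.
Proof. by apply/matrixP=> i j; rewrite !mxE eq_sym; case: (i == j); rewrite ?conjC1 ?conjC0. Qed.

Lemma adj_sum m n I (r : seq I) (F : I -> 'M[C]_(m, n)) :
  adj (\sum_(k <- r) F k) = \sum_(k <- r) adj (F k).
Proof.
apply/matrixP=> i j; rewrite !mxE !summxE rmorph_sum.
by apply: eq_bigr => k _; rewrite mxE.
Qed.

Lemma mxtrace_mul_adj_ge0 m n (A : 'M[C]_(m, n)) : 0 <= \tr (A *m adj A).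
Proof.
apply: sumr_ge0 => a _; rewrite mxE; apply: sumr_ge0 => b _.
by rewrite mxE mul_conjC_ge0.
Qed.

Lemma mxtrace_sqr_ge n (M : 'M[C]_n) :
  adj M = M -> \tr M = n%:R -> n%:R <= \tr (M *m M).
Proof.
move=> adjM trM.
have := mxtrace_mul_adj_ge0 (M - 1%:M).
rewrite adjB adj1 adjM mulmxBl !mulmxBr mulmx1 mul1mx mulmx1.
rewrite !linearB /= trM mxtrace1 opprB addrA subrK.
by rewrite subr_ge0.
Qed.


Definition qform n (x : 'cV[C]_n) (A : 'M[C]_n) : C := (adj x *m A *m x) 0 0.

Lemma qformE n (x : 'cV[C]_n) (A : 'M[C]_n) :
  qform x A = \sum_a \sum_b (x a 0)^* * A a b * x b 0.
Proof.
rewrite /qform mxE exchange_big; apply: eq_bigr => b _; rewrite mxE mulr_suml.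
by apply: eq_bigr => a _; rewrite !mxE.
Qed.

Lemma qform_delta n (i : 'I_n) (A : 'M[C]_n) : qform (delta_mx i 0) A = A i i.
Proof. by rewrite /qform adj_delta -rowE -colE !mxE. Qed.

Lemma qformZ n (s : C) (x : 'cV[C]_n) (A : 'M[C]_n) :
  qform (s *: x) A = s^* * s * qform x A.
Proof. by rewrite /qform adjZ -!scalemxAl !scalemxAr scalerA -scalemxAr mxE. Qed.

Lemma mxtrace_kraus_rank1 n (K : seq 'M[C]_n) (x y : 'cV[C]_n) :
  \tr (kraus_apply K (x *m adj y) *m kraus_apply K (y *m adj x))
  = \sum_(k <- K) \sum_(l <- K) qform y (adj k *m l) * qform x (adj l *m k).
Proof.
rewrite /kraus_apply mulmx_suml linear_sum; apply: eq_bigr => k _.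
rewrite mulmx_sumr linear_sum; apply: eq_bigr => l _.
have -> : k *m (x *m adj y) *m adj k *m (l *m (y *m adj x) *m adj l)
   = k *m x *m (adj y *m (adj k *m l) *m y) *m (adj x *m adj l).
  by rewrite !mulmxA.
rewrite [adj y *m _ *m _]mx11_scalar mul_mx_scalar -scalemxAl linearZ /=.
by rewrite mxtrace_mulC /mxtrace big_ord1 /qform !mulmxA.
Qed.

Lemma purity_kraus_scale n (K : seq 'M[C]_n) (s : C) (x : 'cV[C]_n) :
  purity (kraus_apply K ((s *: x) *m adj (s *: x)))
  = (s^* * s) ^+ 2 * purity (kraus_apply K (x *m adj x)).
Proof.
rewrite /purity !mxtrace_kraus_rank1 mulr_sumr; apply: eq_bigr => k _.
rewrite mulr_sumr; apply: eq_bigr => l _.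
by rewrite !qformZ mulrACA.
Qed.

Lemma sum_mxvec_index m n (G : 'I_(m * n) -> C) :
  \sum_k G k = \sum_i \sum_j G (mxvec_index i j).
Proof.
rewrite pair_big (reindex _ (curry_mxvec_bij m n)) /=.
by apply: eq_bigr => -[i j].
Qed.

Lemma kron_mxvec_index m1 n1 m2 n2 (A : 'M[C]_(m1, n1)) (B : 'M[C]_(m2, n2)) i j k l :
  kron A B (mxvec_index i j) (mxvec_index k l) = A i k * B j l.
Proof. by rewrite mxE /pair_of_index !cast_ordK !enum_rankK. Qed.

Lemma mxtrace_kron_mul m n (A A' : 'M[C]_m) (B B' : 'M[C]_n) :
  \tr (kron A B *m kron A' B') = \tr (A *m A') * \tr (B *m B').
Proof.
rewrite /mxtrace sum_mxvec_index big_distrl /=; apply: eq_bigr => i _.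
rewrite big_distrr /=; apply: eq_bigr => j _.
rewrite mxE sum_mxvec_index !mxE big_distrl /=; apply: eq_bigr => k _.
rewrite big_distrr /=; apply: eq_bigr => l _.
by rewrite !kron_mxvec_index mulrACA.
Qed.

Lemma mxtrace_delta_mul n (i j k l : 'I_n) :
  \tr (delta_mx i j *m delta_mx k l : 'M[C]_n) = (j == k)%:R * (i == l)%:R.
Proof.
rewrite mul_delta_mx_cond raddfMn /= mulrC mulr_natr; congr (_ *+ _).
rewrite /mxtrace (eq_bigr (fun a => (i == a)%:R * (l == a)%:R)) ?big_deltar //.
by move=> a _; rewrite mxE -natrM mulnb !(eq_sym a).
Qed.

Lemma purity_jamiolkowski n (K : seq 'M[C]_n) :
  purity (jamiolkowski K)
  = n%:R ^- 2 * \sum_(k <- K) \sum_(l <- K) \tr (adj k *m l) * \tr (adj l *m k).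
Proof.
pose Phi i j := kraus_apply K (unit_mx C i j).
have collapse : \tr ((\sum_i \sum_j kron (Phi i j) (unit_mx C i j)) *m
                     (\sum_i \sum_j kron (Phi i j) (unit_mx C i j)))
               = \sum_i \sum_j \tr (Phi i j *m Phi j i).
  rewrite mulmx_suml linear_sum; apply: eq_bigr => i _.
  rewrite mulmx_suml linear_sum; apply: eq_bigr => j _.
  rewrite mulmx_sumr linear_sum.
  rewrite (eq_bigr (fun k => \tr (Phi i j *m Phi k i) * (j == k)%:R)) ?big_deltar //.
  move=> k _; rewrite mulmx_sumr linear_sum.
  rewrite (eq_bigr (fun l => \tr (Phi i j *m Phi k l) * (j == k)%:R * (i == l)%:R)).
    by rewrite big_deltar.
  by move=> l _; rewrite /= mxtrace_kron_mul mxtrace_delta_mul mulrA.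
rewrite /purity /jamiolkowski -scalemxAl -scalemxAr !mxtraceZ mulrA -expr2 exprVn.
rewrite collapse; congr (_ * _).
have unitE (i j : 'I_n) : unit_mx C i j = delta_mx i 0 *m adj (delta_mx j 0 : 'cV[C]_n).
  by rewrite adj_delta mul_delta_mx.
under eq_bigr do under eq_bigr do rewrite /Phi !unitE mxtrace_kraus_rank1.
under eq_bigr do rewrite exchange_big.
under eq_bigr do under eq_bigr do rewrite exchange_big.
rewrite [LHS]exchange_big; under eq_bigr do rewrite exchange_big.
apply: eq_bigr => k _; apply: eq_bigr => l _.
rewrite exchange_big /mxtrace big_distrl; apply: eq_bigr => j _.
by rewrite big_distrr; apply: eq_bigr => i _; rewrite !qform_delta.
Qed.

Lemma prim_root_i : 4.-primitive_root ('i : C).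
Proof.
have i4 : ('i : C) ^+ 4 = 1 by rewrite (exprM _ 2 2) sqrCi sqrrN expr1n.
have N1_neq1 : ((-1 : C) == 1) = false := lt_eqF (lt_trans (ltrN10 C) ltr01).
have i_neq1 : (('i : C) == 1) = false.
  by apply/eqP => i1; move: (sqrCi C); rewrite i1 expr1n => /eqP; rewrite eq_sym N1_neq1.
apply/andP; split => //; apply/forallP => -[[|[|[|[|m]]]] //= _]; rewrite unity_rootE.
- by rewrite expr1 i_neq1.
- by rewrite sqrCi N1_neq1.
- suff /negbTE -> : ('i : C) ^+ 3 != 1 by [].
  by apply: contraFN i_neq1 => /eqP i3; rewrite -[X in _ == X]i4 exprS i3 mulr1.
- by rewrite eqxx eqb_id; apply/eqP.
Qed.

Lemma conj_iexp k : (('i : C) ^+ k)^* = 'i ^+ (3 * k).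
Proof. by rewrite rmorphXn /= conjCi exprM exprS sqrCi mulrN1. Qed.

Definition phase_vec n (t : {ffun 'I_n -> 'I_4}) : 'cV[C]_n := \col_x 'i ^+ t x.

Lemma phase_vec_norm n (t : {ffun 'I_n -> 'I_4}) :
  adj (phase_vec t) *m phase_vec t = n%:R%:M.
Proof.
apply/matrixP=> i j; rewrite !ord1 !mxE eqxx mulr1n.
rewrite (eq_bigr (fun _ => 1)) ?sumr_const ?card_ord // => x _.
rewrite !mxE conj_iexp -exprD -{2}(mul1n (t x)) -mulnDl.
by rewrite exprM (prim_expr_order prim_root_i) expr1n.
Qed.

(* Using ['i^* = 'i^+3], this is the exponent of ['i ^+ t x] in the
   coordinate-[x] factor of [(u a)^* * u b * (u c)^* * u d] for [u = phase_vec t]. *)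
Definition phase_exponent n (a b c d x : 'I_n) : nat :=
  3 * (x == a) + (x == b) + 3 * (x == c) + (x == d).

Lemma sum_phase_exponent n (a b c d : 'I_n) (f : 'I_n -> nat) :
  (\sum_x phase_exponent a b c d x * f x = 3 * f a + f b + 3 * f c + f d)%N.
Proof.
have sum_eq (e : 'I_n) : (\sum_x (x == e) * f x = f e)%N.
  by rewrite (bigD1 e) //= eqxx mul1n big1 ?addn0 // => x /negPf ->.
under eq_bigr do rewrite !mulnDl.
by rewrite !big_split /= !sum_eq big1 // addn0.
Qed.

Lemma phase_exponent_dvd4 n (a b c d : 'I_n) :
  [forall x, 4 %| phase_exponent a b c d x]%N
  = ((a == b) && (c == d)) || ((a == d) && (c == b)).
Proof.
apply/forallP/idP => [dvd4 | ]; last first.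
  by case/orP=> /andP[/eqP <- /eqP <-] x; rewrite /phase_exponent; case: (x == a); case: (x == c).
have [eq_ab | neq_ab] /= := eqVneq a b.
  subst b; have [eq_ac | neq_ac] /= := eqVneq a c.
    by subst c; have := dvd4 a; rewrite /phase_exponent !eqxx /=; case: (a == d).
  have := dvd4 c; rewrite /phase_exponent eqxx (eq_sym c a) (negPf neq_ac) /=.
  by case: (c == d).
have := dvd4 a; rewrite /phase_exponent eqxx (negPf neq_ab) /=.
have [eq_ac | neq_ac] := eqVneq a c; first by subst c; case: (a == d).
have [eq_ad | //] /= := eqVneq a d; subst d => _.
have := dvd4 b; rewrite /phase_exponent eqxx (eq_sym b a) (negPf neq_ab) /=.
by rewrite (eq_sym c b); case: (b == c).
Qed.

Lemma sum_phase_moment n (a b c d : 'I_n) :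
  \sum_(t : {ffun 'I_n -> 'I_4})
     (phase_vec t a 0)^* * phase_vec t b 0 * ((phase_vec t c 0)^* * phase_vec t d 0)
  = (4 ^ n)%:R * (((a == b) && (c == d)) || ((a == d) && (c == b)))%:R.
Proof.
have factor (t : {ffun 'I_n -> 'I_4}) :
   (phase_vec t a 0)^* * phase_vec t b 0 * ((phase_vec t c 0)^* * phase_vec t d 0)
   = \prod_x ('i : C) ^+ (phase_exponent a b c d x * t x).
  by rewrite prodrXr sum_phase_exponent !mxE !conj_iexp -!exprD !addnA.
under eq_bigr do rewrite factor.
rewrite -(bigA_distr_bigA (fun x (s : 'I_4) => ('i : C) ^+ (phase_exponent a b c d x * s))).
under eq_bigr do rewrite (sum_prim_root_expr _ prim_root_i).
rewrite prodr_if phase_exponent_dvd4 natrX.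
by case: (_ || _); rewrite ?mulr1 ?mulr0.
Qed.

Lemma sum_pairing_indicator n (B : 'M[C]_n) (a b : 'I_n) :
  \sum_c \sum_d B c d * (((a == b) && (c == d)) || ((a == d) && (c == b)))%:R
  = B b a + (a == b)%:R * (\tr B - B a a).
Proof.
have [<- | neq_ab] /= := eqVneq a b.
  rewrite mul1r addrC subrK /mxtrace; apply: eq_bigr => c _.
  rewrite -[RHS](big_deltar c (fun d => B c d)); apply: eq_bigr => d _.
  congr (_ * _%:R).
  have [// | neq_cd] /= := eqVneq c d.
  by have [eq_ca | ] := eqVneq c a; rewrite ?andbF // -eq_ca (negPf neq_cd).
rewrite mul0r addr0 -(big_deltar b (fun c => B c a)).
apply: eq_bigr => c _; rewrite -(big_deltar a (fun d => B c d)) mulr_suml.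
by apply: eq_bigr => d _; rewrite -mulrA -natrM mulnb (eq_sym b c) andbC.
Qed.

Lemma phase_design n (A B : 'M[C]_n) :
  \sum_a A a a * B a a + (4 ^ n)%:R^-1 *
     \sum_(t : {ffun 'I_n -> 'I_4}) qform (phase_vec t) A * qform (phase_vec t) B
  = \tr A * \tr B + \tr (A *m B).
Proof.
have expand (t : {ffun 'I_n -> 'I_4}) : qform (phase_vec t) A * qform (phase_vec t) B =
    \sum_a \sum_b \sum_c \sum_d A a b * B c d *
      ((phase_vec t a 0)^* * phase_vec t b 0 * ((phase_vec t c 0)^* * phase_vec t d 0)).
  rewrite !qformE big_distrl; apply: eq_bigr => a _.
  rewrite big_distrl; apply: eq_bigr => b _.
  rewrite big_distrr; apply: eq_bigr => c _.
  rewrite big_distrr; apply: eq_bigr => d _.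
  set xa := (_ a 0)^*; set xb := _ b 0; set xc := (_ c 0)^*; set xd := _ d 0.
  by rewrite (mulrAC xa) (mulrC (xa * xb)) (mulrAC xc) (mulrC (xc * xd)) mulrACA.
have moments : \sum_(t : {ffun 'I_n -> 'I_4}) qform (phase_vec t) A * qform (phase_vec t) B
    = (4 ^ n)%:R * \sum_a \sum_b A a b *
        (\sum_c \sum_d B c d * (((a == b) && (c == d)) || ((a == d) && (c == b)))%:R).
  under eq_bigr do rewrite expand.
  rewrite exchange_big mulr_sumr; apply: eq_bigr => a _.
  rewrite exchange_big mulr_sumr; apply: eq_bigr => b _.
  rewrite exchange_big mulr_sumr mulr_sumr; apply: eq_bigr => c _.
  rewrite exchange_big mulr_sumr mulr_sumr; apply: eq_bigr => d _.
  by rewrite -mulr_sumr sum_phase_moment mulrCA !mulrA.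
have diag (a : 'I_n) : \sum_b A a b * ((a == b)%:R * (\tr B - B a a)) = A a a * (\tr B - B a a).
  rewrite (eq_bigr (fun b => A a b * (\tr B - B a a) * (a == b)%:R)) ?big_deltar //.
  by move=> b _; rewrite mulrCA mulrC.
have trAB : \tr (A *m B) = \sum_a \sum_b A a b * B b a.
  by apply: eq_bigr => a _; rewrite mxE.
rewrite moments mulrA mulVf ?pnatr_eq0 ?expn_eq0 // mul1r trAB.
have row (a : 'I_n) : \sum_b A a b *
      (\sum_c \sum_d B c d * (((a == b) && (c == d)) || ((a == d) && (c == b)))%:R)
    = \sum_b A a b * B b a + A a a * (\tr B - B a a).
  under eq_bigr do rewrite sum_pairing_indicator mulrDr.
  by rewrite big_split /= diag.
rewrite [X in _ + X](eq_bigr _ (fun a _ => row a)) big_split /=.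
under [X in _ + (_ + X)]eq_bigr do rewrite mulrBr.
rewrite sumrB -mulr_suml.
by rewrite addrCA [X in _ + X]addrC subrK addrC.
Qed.

Lemma kraus_trace_sqr_ge n (K : seq 'M[C]_n) :
  trace_preserving K ->
  n%:R <= \sum_(k <- K) \sum_(l <- K) \tr (adj k *m l *m (adj l *m k)).
Proof.
move=> tp_K; set M := \sum_(k <- K) k *m adj k.
have -> : \sum_(k <- K) \sum_(l <- K) \tr (adj k *m l *m (adj l *m k)) = \tr (M *m M).
  rewrite mulmx_suml linear_sum; apply: eq_bigr => k _.
  rewrite mulmx_sumr linear_sum; apply: eq_bigr => l _.
  by rewrite !mulmxA mxtrace_mulC !mulmxA.
apply: mxtrace_sqr_ge.
  by rewrite adj_sum; apply: eq_bigr => k _; rewrite adj_mul adjK.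
rewrite linear_sum -mxtrace1 -tp_K linear_sum; apply: eq_bigr => k _.
exact: mxtrace_mulC.
Qed.

Lemma purity_frame_sum n (K : seq 'M[C]_n) :
  \sum_a purity (kraus_apply K (delta_mx a 0 *m adj (delta_mx a 0 : 'cV[C]_n)))
  + (4 ^ n)%:R^-1 * \sum_(t : {ffun 'I_n -> 'I_4})
      purity (kraus_apply K (phase_vec t *m adj (phase_vec t)))
  = \sum_(k <- K) \sum_(l <- K)
      (\tr (adj k *m l) * \tr (adj l *m k) + \tr (adj k *m l *m (adj l *m k))).
Proof.
rewrite /purity; under eq_bigr do rewrite mxtrace_kraus_rank1.
under [X in _ * X]eq_bigr do rewrite mxtrace_kraus_rank1.
rewrite [X in _ * X]exchange_big mulr_sumr [X in X + _]exchange_big -big_split /=.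
apply: eq_bigr => k _.
rewrite [X in _ * X]exchange_big mulr_sumr [X in X + _]exchange_big -big_split /=.
apply: eq_bigr => l _.
rewrite -phase_design; congr (_ + _).
by apply: eq_bigr => a _; rewrite !qform_delta.
Qed.

Section PurityBounded.
Variables (n : nat) (K : seq 'M[C]_n) (p : C).
Hypothesis n_gt0 : (0 < n)%N.
Hypothesis purity_le : forall v : 'cV[C]_n,
  adj v *m v = 1%:M -> purity (kraus_apply K (v *m adj v)) <= p.

Lemma purity_phase_vec_le (t : {ffun 'I_n -> 'I_4}) :
  purity (kraus_apply K (phase_vec t *m adj (phase_vec t))) <= n%:R ^+ 2 * p.
Proof.
have N_gt0 : (0 : C) < n%:R by rewrite ltr0n.
set s : C := sqrtC n%:R^-1.
have norm_s : s^* * s = n%:R^-1.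
  by rewrite geC0_conj ?sqrtC_ge0 ?invr_ge0 ?ler0n // -expr2 sqrtCK.
have := @purity_le (s *: phase_vec t).
rewrite purity_kraus_scale norm_s adjZ -scalemxAl -scalemxAr phase_vec_norm scalerA.
rewrite norm_s scale_scalar_mx mulVf ?gt_eqF // => /(_ erefl).
by rewrite -(ler_pM2l (exprn_gt0 2 N_gt0)) mulrA -exprMn divff ?gt_eqF // expr1n mul1r.
Qed.

Lemma purity_frame_sum_le :
  \sum_a purity (kraus_apply K (delta_mx a 0 *m adj (delta_mx a 0 : 'cV[C]_n)))
  + (4 ^ n)%:R^-1 * \sum_(t : {ffun 'I_n -> 'I_4})
      purity (kraus_apply K (phase_vec t *m adj (phase_vec t)))
  <= (n%:R + n%:R ^+ 2) * p.
Proof.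
rewrite mulrDl; apply: lerD.
  apply: le_trans (_ : \sum_(a < n) p <= _).
    by apply: ler_sum => a _; apply/purity_le/adj_delta_mul_delta.
  by rewrite sumr_const card_ord mulr_natl.
apply: le_trans (_ : (4 ^ n)%:R^-1 * \sum_(t : {ffun 'I_n -> 'I_4}) n%:R ^+ 2 * p <= _).
  by rewrite ler_wpM2l ?invr_ge0 ?ler0n //; apply: ler_sum => t _; apply: purity_phase_vec_le.
rewrite sumr_const card_ffun !card_ord -[n%:R ^+ 2 * p *+ _]mulr_natl mulKf //.
by rewrite pnatr_eq0 expn_eq0.
Qed.

End PurityBounded.
End Channels.

Lemma purity_depolarizing_bound (R : numFieldType) (N P T eps : R) :
  0 < N -> N <= T -> N ^+ 2 * P + T <= (N + N ^+ 2) * (1 - eps) ->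
  P <= 1 - eps * (N + 1) / N.
Proof.
move=> N_gt0 N_le_T sum_le.
have N_neq0 : N != 0 by rewrite gt_eqF.
have -> : 1 - eps * (N + 1) / N = N ^- 2 * ((N + N ^+ 2) * (1 - eps) - N) by field.
rewrite -(ler_pM2l (exprn_gt0 2 N_gt0)) mulrA divff ?expf_neq0 // mul1r lerBrDr.
by apply: le_trans sum_le; rewrite lerD2l.
Qed.

Theorem proposition1 (C : numClosedFieldType) (n : nat) (hn : (2 <= n)%N)
  (K : seq 'M[C]_n) (hTP : trace_preserving K) (eps : C) :
  (forall v : 'cV[C]_n, adj v *m v = 1%:M ->
     purity (kraus_apply K (v *m adj v)) <= 1 - eps) ->
  purity (jamiolkowski K) <= 1 - eps * (n.+1)%:R / n%:R.
Proof.
move=> purity_le; have n_gt0 : (0 < n)%N := ltnW hn.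
have N_gt0 : (0 : C) < n%:R by rewrite ltr0n.
rewrite -natr1; apply: (purity_depolarizing_bound N_gt0 (kraus_trace_sqr_ge hTP)).
rewrite purity_jamiolkowski mulrA divff ?mul1r ?expf_neq0 ?gt_eqF //.
rewrite -big_split /=; under eq_bigr do rewrite -big_split /=.
by rewrite -purity_frame_sum; apply: purity_frame_sum_le.
Qed.
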